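(* The Hilbert calculus ${\bf Tmd}$ is sound and complete with respect to the Nmatrix $\mathcal M_{\bf Tmd}$: for every $\Gamma\cup\{\alpha\}\subseteq For$, $\Gamma\vdash_{\bf Tmd}\alpha$ iff $\Gamma\vDash_{\mathcal M_{\bf Tmd}}\alpha$.
   Context: Formulas are built from a denumerable set of propositional variables by the unary connectives $\neg$, $\Box$ and the binary connective $\to$; $For$ is the set of all formulas. Abbreviations: $\Diamond\alpha:=\neg\Box\neg\alpha$, $\alpha\vee\beta:=\neg\alpha\to\beta$. ${\bf Tmd}$ is the Hilbert calculus whose axioms are all instances (over $For$) of the axiom schemas of a standard Hilbert calculus for classical propositional logic in the signature $\{\neg,\to\}$, plus all instances of: (K) $\Box(\alpha\to\beta)\to(\Box\alpha\to\Box\beta)$; (Kdet) $\Box(\alpha\to\beta)\to(\Diamond\alpha\to\Box\beta)$; (K2) $\Diamond(\alpha\to\beta)\to(\Box\alpha\to\Diamond\beta)$; (M1) $\neg\Diamond\alpha\to\Box(\alpha\to\beta)$; (M2) $\Box\beta\to\Box(\alpha\to\beta)$; (M3) $\Diamond\beta\to\Diamond(\alpha\to\beta)$; (M4) $\Diamond\neg\alpha\to\Diamond(\alpha\to\beta)$; (T) $\Box\alpha\to\alpha$; (DN1) $\Box\alpha\to\Box\neg\neg\alpha$; (DN2) $\Box\neg\neg\alpha\to\Box\alpha$; modus ponens is the only rule. Nmatrix semantics: an Nmatrix has a domain $A$, designated values $D\subseteq A$ and, for each connective, a multioperation giving nonempty subsets of $A$; a valuation is $v:For\to A$ with $v(\neg\alpha)\in\tilde\neg(v(\alpha))$,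 $v(\Box\alpha)\in\tilde\Box(v(\alpha))$, $v(\alpha\to\beta)\in v(\alpha)\tilde\to v(\beta)$; $\Gamma\vDash\alpha$ iff every valuation designating all of $\Gamma$ designates $\alpha$. $\mathcal M_{\bf Tmd}$: domain $\{T^+,C^+,C^-,F^-\}$, designated $\{T^+,C^+\}$; $\tilde\neg T^+=\{F^-\}$, $\tilde\neg C^+=\{C^-\}$, $\tilde\neg C^-=\{C^+\}$, $\tilde\neg F^-=\{T^+\}$; $\tilde\Box T^+=\{T^+,C^+\}$ and $\tilde\Box x=\{C^-,F^-\}$ for $x\neq T^+$; implication is deterministic: $x\tilde\to y=\{\max(n(x),y)\}$, where $n(T^+)=F^-$, $n(C^+)=C^-$, $n(C^-)=C^+$, $n(F^-)=T^+$ and the maximum is taken in the chain $F^-<C^-<C^+<T^+$. *)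

Inductive For : Type :=
| Var : nat -> For
| Neg : For -> For
| Box : For -> For
| Imp : For -> For -> For.

Definition Dia (a : For) : For := Neg (Box (Neg a)).
Definition Or (a b : For) : For := Imp (Neg a) b.

(* Axioms of Tmd. Classical propositional part: the standard
   Lukasiewicz/Mendelson Hilbert calculus over {neg, imp}. *)
Inductive TmdAxiom : For -> Prop :=
| Ax1 a b : TmdAxiom (Imp a (Imp b a))
| Ax2 a b c : TmdAxiom (Imp (Imp a (Imp b c)) (Imp (Imp a b) (Imp a c)))
| Ax3 a b : TmdAxiom (Imp (Imp (Neg b) (Neg a)) (Imp (Imp (Neg b) a) b))
| AxK a b : TmdAxiom (Imp (Box (Imp a b)) (Imp (Box a) (Box b)))
| AxKdet a b : TmdAxiom (Imp (Box (Imp a b)) (Imp (Dia a) (Box b)))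
| AxK2 a b : TmdAxiom (Imp (Dia (Imp a b)) (Imp (Box a) (Dia b)))
| AxM1 a b : TmdAxiom (Imp (Neg (Dia a)) (Box (Imp a b)))
| AxM2 a b : TmdAxiom (Imp (Box b) (Box (Imp a b)))
| AxM3 a b : TmdAxiom (Imp (Dia b) (Dia (Imp a b)))
| AxM4 a b : TmdAxiom (Imp (Dia (Neg a)) (Dia (Imp a b)))
| AxT a : TmdAxiom (Imp (Box a) a)
| AxDN1 a : TmdAxiom (Imp (Box a) (Box (Neg (Neg a))))
| AxDN2 a : TmdAxiom (Imp (Box (Neg (Neg a))) (Box a)).

Inductive Derivable (Gamma : For -> Prop) : For -> Prop :=
| D_hyp a : Gamma a -> Derivable Gamma a
| D_ax a : TmdAxiom a -> Derivable Gamma a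
| D_mp a b : Derivable Gamma (Imp a b) -> Derivable Gamma a -> Derivable Gamma b.

Inductive V4 : Type := Tp | Cp | Cm | Fm.   (* T+, C+, C-, F- *)

Definition designated (x : V4) : Prop := x = Tp \/ x = Cp.

(* multioperations, as predicates "y is in the output set" *)
Definition negM (x : V4) (y : V4) : Prop :=
  match x with
  | Tp => y = Fm
  | Cp => y = Cm
  | Cm => y = Cp
  | Fm => y = Tp
  end.

Definition boxM (x : V4) (y : V4) : Prop :=
  match x with
  | Tp => y = Tp \/ y = Cp
  | _ => y = Cm \/ y = Fm
  end.

Definition rank (x : V4) : nat :=
  match x with Fm => 0 | Cm => 1 | Cp => 2 | Tp => 3 end.

Definition nfun (x : V4) : V4 :=
  match x with Tp => Fm | Cp => Cm | Cm => Cp | Fm => Tp end.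

Definition maxV (x y : V4) : V4 := if Nat.leb (rank x) (rank y) then y else x.

Definition impM (x y : V4) (z : V4) : Prop := z = maxV (nfun x) y.

Definition valuation (v : For -> V4) : Prop :=
  forall a b : For,
    negM (v a) (v (Neg a)) /\ boxM (v a) (v (Box a)) /\ impM (v a) (v b) (v (Imp a b)).

Definition Entails (Gamma : For -> Prop) (a : For) : Prop :=
  forall v : For -> V4, valuation v ->
    (forall g, Gamma g -> designated (v g)) -> designated (v a).

From Stdlib Require Import Classical ClassicalEpsilon Lia Cantor.

(* Soundness is a truth-table check of each axiom, using that [v (Box a)] is
   designated exactly when [v a = T+].  For completeness, extend Gamma to a
   Lindenbaum set [Lind], maximal among those not deriving alpha, and read a
   valuation off it: [a] gets T+ if [Box a] is in [Lind], F- if [Box (Neg a)]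
   is, and otherwise C+ or C- according as [a] is in [Lind].  The modal axioms are exactly what
   makes this a valuation of M_Tmd. *)

Lemma V4_ext x y :
  (x = Tp <-> y = Tp) -> (x = Fm <-> y = Fm) -> (designated x <-> designated y) -> x = y.
Proof. unfold designated; destruct x, y; intuition discriminate. Qed.

Lemma nfun_Tp x : nfun x = Tp <-> x = Fm.
Proof. destruct x; simpl; intuition discriminate. Qed.

Lemma nfun_Fm x : nfun x = Fm <-> x = Tp.
Proof. destruct x; simpl; intuition discriminate. Qed.

Lemma designated_nfun x : designated (nfun x) <-> ~ designated x.
Proof. unfold designated; destruct x; simpl; intuition discriminate. Qed.

Lemma maxV_nfun_Tp x y : maxV (nfun x) y = Tp <-> x = Fm \/ y = Tp.
Proof. destruct x, y; simpl; intuition discriminate. Qed.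

Lemma maxV_nfun_Fm x y : maxV (nfun x) y = Fm <-> x = Tp /\ y = Fm.
Proof. destruct x, y; simpl; intuition discriminate. Qed.

Lemma designated_maxV_nfun x y :
  designated (maxV (nfun x) y) <-> (designated x -> designated y).
Proof. unfold designated; destruct x, y; simpl; intuition discriminate. Qed.

Lemma negM_nfun x : negM x (nfun x).
Proof. destruct x; reflexivity. Qed.

Lemma boxM_iff x y : boxM x y <-> (x = Tp <-> designated y).
Proof. unfold designated; destruct x, y; simpl; intuition discriminate. Qed.

Section Valuation.
Variable v : For -> V4.
Hypothesis v_valuation : valuation v.

Lemma valuation_Neg a : v (Neg a) = nfun (v a).
Proof. destruct (v_valuation a a) as [H _]; destruct (v a); exact H. Qed.

Lemma valuation_Imp a b : v (Imp a b) = maxV (nfun (v a)) (v b).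
Proof. apply (v_valuation a b). Qed.

Lemma designated_Neg a : designated (v (Neg a)) <-> ~ designated (v a).
Proof. rewrite valuation_Neg; apply designated_nfun. Qed.

Lemma designated_Imp a b : designated (v (Imp a b)) <-> (designated (v a) -> designated (v b)).
Proof. rewrite valuation_Imp; apply designated_maxV_nfun. Qed.

Lemma designated_Box a : designated (v (Box a)) <-> v a = Tp.
Proof. symmetry; apply boxM_iff, (v_valuation a a). Qed.

Lemma designated_Dia a : designated (v (Dia a)) <-> v a <> Fm.
Proof. unfold Dia; rewrite designated_Neg, designated_Box, valuation_Neg, nfun_Tp; tauto. Qed.

Lemma axiom_designated a : TmdAxiom a -> designated (v a).
Proof.
  destruct 1;
    repeat rewrite ?designated_Imp, ?designated_Dia, ?designated_Neg, ?designated_Box;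
    rewrite ?valuation_Imp, ?valuation_Neg;
    repeat match goal with |- context [v ?t] => destruct (v t) end;
    unfold designated; simpl; intuition discriminate.
Qed.

End Valuation.

Theorem soundness G a : Derivable G a -> Entails G a.
Proof.
  intros D v Hv HG; induction D as [a Ha | a Ha | a b _ IHab _ IHa].
  - exact (HG a Ha).
  - exact (axiom_designated v Hv a Ha).
  - exact (proj1 (designated_Imp v Hv a b) IHab IHa).
Qed.

Definition add_premise (G : For -> Prop) (a : For) : For -> Prop := fun x => G x \/ x = a.

Lemma Derivable_mono (G D : For -> Prop) a :
  (forall x, G x -> D x) -> Derivable G a -> Derivable D a.
Proof. intros HGD; induction 1; eauto using Derivable. Qed.

Lemma Derivable_new_premise G a : Derivable (add_premise G a) a.
Proof. apply D_hyp; right; reflexivity. Qed.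

Lemma Derivable_weaken G a b : Derivable G b -> Derivable (add_premise G a) b.
Proof. apply Derivable_mono; intros x Hx; left; exact Hx. Qed.

Lemma Derivable_imp_refl G a : Derivable G (Imp a a).
Proof.
  apply (D_mp _ (Imp a (Imp a a))); [| apply D_ax, Ax1].
  apply (D_mp _ (Imp a (Imp (Imp a a) a))); [apply D_ax, Ax2 | apply D_ax, Ax1].
Qed.

Theorem deduction G a b : Derivable (add_premise G a) b -> Derivable G (Imp a b).
Proof.
  induction 1 as [b [Hb | ->] | b Hb | b c _ IHbc _ IHb].
  - eapply D_mp; [apply D_ax, Ax1 | apply D_hyp, Hb].
  - apply Derivable_imp_refl.
  - eapply D_mp; [apply D_ax, Ax1 | apply D_ax, Hb].
  - eapply D_mp; [eapply D_mp; [apply D_ax, Ax2 | exact IHbc] | exact IHb].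
Qed.

Lemma Derivable_neg_imp G a b : Derivable G (Imp (Neg a) (Imp a b)).
Proof.
  apply deduction, deduction.
  eapply D_mp; [eapply D_mp; [apply D_ax, (Ax3 a b) |] |].
  - eapply D_mp; [apply D_ax, Ax1 | apply Derivable_weaken, Derivable_new_premise].
  - eapply D_mp; [apply D_ax, Ax1 | apply Derivable_new_premise].
Qed.

Lemma Derivable_dneg_elim G a : Derivable G (Imp (Neg (Neg a)) a).
Proof.
  apply deduction.
  eapply D_mp; [eapply D_mp; [apply D_ax, (Ax3 (Neg a) a) |] | apply Derivable_imp_refl].
  eapply D_mp; [apply D_ax, Ax1 | apply Derivable_new_premise].
Qed.

Lemma Derivable_dneg_intro G a : Derivable G (Imp a (Neg (Neg a))).
Proof.
  apply deduction.
  eapply D_mp; [eapply D_mp; [apply D_ax, (Ax3 a (Neg (Neg a))) | apply Derivable_dneg_elim] |].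
  eapply D_mp; [apply D_ax, Ax1 | apply Derivable_new_premise].
Qed.

Lemma Derivable_contra_rev G a b : Derivable G (Imp (Imp (Neg b) (Neg a)) (Imp a b)).
Proof.
  apply deduction, deduction.
  eapply D_mp;
    [eapply D_mp; [apply D_ax, (Ax3 a b) | apply Derivable_weaken, Derivable_new_premise] |].
  eapply D_mp; [apply D_ax, Ax1 | apply Derivable_new_premise].
Qed.

Lemma Derivable_contra G a b : Derivable G (Imp (Imp a b) (Imp (Neg b) (Neg a))).
Proof.
  apply deduction.
  eapply D_mp; [apply Derivable_contra_rev |].
  apply deduction.
  eapply D_mp; [apply Derivable_dneg_intro |].
  eapply D_mp; [apply Derivable_weaken, Derivable_new_premise |].
  eapply D_mp; [apply Derivable_dneg_elim | apply Derivable_new_premise].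
Qed.

Lemma Derivable_by_cases G a c :
  Derivable G (Imp a c) -> Derivable G (Imp (Neg a) c) -> Derivable G c.
Proof.
  intros Hpos Hneg.
  eapply D_mp; [eapply D_mp; [apply D_ax, (Ax3 (Neg a) c) |] |].
  - eapply D_mp; [apply Derivable_contra | exact Hneg].
  - eapply D_mp; [apply Derivable_contra | exact Hpos].
Qed.

Fixpoint encode (a : For) : nat :=
  match a with
  | Var n => to_nat (0, n)
  | Neg a => to_nat (1, encode a)
  | Box a => to_nat (2, encode a)
  | Imp a b => to_nat (3, to_nat (encode a, encode b))
  end.

(* [fuel] only bounds the recursion depth; it suffices that it exceeds the code. *)
Fixpoint decode (fuel n : nat) : For :=
  match fuel with
  | 0 => Var 0
  | S fuel =>
    match of_nat n with
    | (0, m) => Var m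
    | (1, m) => Neg (decode fuel m)
    | (2, m) => Box (decode fuel m)
    | (_, m) => let (p, q) := of_nat m in Imp (decode fuel p) (decode fuel q)
    end
  end.

Lemma decode_encode a fuel : encode a < fuel -> decode fuel (encode a) = a.
Proof.
  revert fuel; induction a as [n | a IHa | a IHa | a IHa b IHb];
    intros [| fuel] Hfuel; cbn [encode decode] in *; try lia; rewrite cancel_of_to.
  - reflexivity.
  - pose proof (to_nat_non_decreasing 1 (encode a)); rewrite IHa by lia; reflexivity.
  - pose proof (to_nat_non_decreasing 2 (encode a)); rewrite IHa by lia; reflexivity.
  - pose proof (to_nat_non_decreasing 3 (to_nat (encode a, encode b))).
    pose proof (to_nat_non_decreasing (encode a) (encode b)).
    rewrite cancel_of_to, IHa, IHb by lia; reflexivity.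
Qed.

Definition enum_For (k : nat) : For := decode (S k) k.

Lemma enum_For_surj a : exists k, enum_For k = a.
Proof. exists (encode a); apply decode_encode; lia. Qed.

Section Lindenbaum.
Variable G : For -> Prop.
Variable alpha : For.
Hypothesis G_not_alpha : ~ Derivable G alpha.

Fixpoint stage (n : nat) : For -> Prop :=
  match n with
  | 0 => G
  | S n =>
      let next := add_premise (stage n) (enum_For n) in
      if excluded_middle_informative (Derivable next alpha) then stage n else next
  end.

Definition Lind : For -> Prop := fun x => exists n, stage n x.

Lemma stage_mono n m x : n <= m -> stage n x -> stage m x.
Proof.
  induction 1; [tauto | intros Hx; simpl].
  destruct excluded_middle_informative; [| left]; auto.
Qed.

Lemma stage_not_alpha n : ~ Derivable (stage n) alpha.
Proof. induction n; simpl; [exact G_not_alpha | destruct excluded_middle_informative; tauto]. Qed.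

Lemma Derivable_Lind_stage a : Derivable Lind a -> exists n, Derivable (stage n) a.
Proof.
  induction 1 as [a [n Ha] | a Ha | a b _ [n Hab] _ [m Ha]].
  - exists n; apply D_hyp, Ha.
  - exists 0; apply D_ax, Ha.
  - exists (Nat.max n m).
    apply (D_mp _ a); [revert Hab | revert Ha];
      apply Derivable_mono; intros x; apply stage_mono; lia.
Qed.

Lemma Lind_not_alpha : ~ Derivable Lind alpha.
Proof. intros H; destruct (Derivable_Lind_stage _ H) as [n Hn]; exact (stage_not_alpha n Hn). Qed.

Lemma Lind_extends x : G x -> Lind x.
Proof. exists 0; assumption. Qed.

Lemma Lind_maximal a : Lind a \/ Derivable Lind (Imp a alpha).
Proof.
  destruct (enum_For_surj a) as [k <-].
  destruct (excluded_middle_informative (Derivable (add_premise (stage k) (enum_For k)) alpha))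
    as [Halpha | Halpha].
  - right; apply deduction; revert Halpha; apply Derivable_mono.
    intros x [Hx | ->]; [left; exists k; exact Hx | right; reflexivity].
  - left; exists (S k); simpl.
    destruct excluded_middle_informative; [contradiction | right; reflexivity].
Qed.

Lemma Lind_closed a : Derivable Lind a -> Lind a.
Proof.
  intros Ha; destruct (Lind_maximal a) as [| Halpha]; [assumption |].
  exfalso; exact (Lind_not_alpha (D_mp _ _ _ Halpha Ha)).
Qed.

Lemma Lind_mp a b : Lind (Imp a b) -> Lind a -> Lind b.
Proof. intros Hab Ha; apply Lind_closed; eapply D_mp; apply D_hyp; eassumption. Qed.

Lemma Lind_axiom_mp a b : TmdAxiom (Imp a b) -> Lind a -> Lind b.
Proof. intros Hab; apply Lind_mp, Lind_closed, D_ax, Hab. Qed.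

Lemma Lind_Neg a : Lind (Neg a) <-> ~ Lind a.
Proof.
  split.
  - intros Hna Ha; apply Lind_not_alpha, D_hyp.
    apply Lind_closed; eapply D_mp; [eapply D_mp |];
      [apply Derivable_neg_imp | apply D_hyp, Hna | apply D_hyp, Ha].
  - intros Ha; destruct (Lind_maximal a) as [| Hpos]; [contradiction |].
    destruct (Lind_maximal (Neg a)) as [| Hneg]; [assumption |].
    exfalso; exact (Lind_not_alpha (Derivable_by_cases _ _ _ Hpos Hneg)).
Qed.

Lemma Lind_Imp a b : Lind (Imp a b) <-> (Lind a -> Lind b).
Proof.
  split; [apply Lind_mp |].
  intros Hab; destruct (classic (Lind a)) as [Ha | Ha].
  - eapply Lind_axiom_mp; [apply Ax1 | exact (Hab Ha)].
  - apply Lind_Neg in Ha.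
    eapply Lind_mp; [apply Lind_closed, Derivable_neg_imp | exact Ha].
Qed.

Lemma Lind_Dia a : Lind (Dia a) <-> ~ Lind (Box (Neg a)).
Proof. apply Lind_Neg. Qed.

Lemma Lind_Box_Imp a b : Lind (Box (Imp a b)) <-> Lind (Box (Neg a)) \/ Lind (Box b).
Proof.
  split.
  - intros Hab; destruct (classic (Lind (Box (Neg a)))) as [| Ha]; [left; assumption | right].
    apply Lind_Dia in Ha.
    eapply Lind_mp; [eapply Lind_axiom_mp; [apply AxKdet | exact Hab] | exact Ha].
  - intros [Ha | Hb].
    + eapply Lind_axiom_mp; [apply (AxM1 a b) |].
      apply Lind_Neg; rewrite Lind_Dia; tauto.
    + eapply Lind_axiom_mp; [apply AxM2 | exact Hb].
Qed.

Lemma Lind_Box_Neg_Imp a b :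
  Lind (Box (Neg (Imp a b))) <-> Lind (Box a) /\ Lind (Box (Neg b)).
Proof.
  assert (no_Dia_Imp : Lind (Box (Neg (Imp a b))) -> ~ Lind (Dia (Imp a b)))
    by (rewrite Lind_Dia; tauto).
  split.
  - intros Hab; split; apply NNPP; intros Hn; apply (no_Dia_Imp Hab).
    + apply (Lind_axiom_mp (Dia (Neg a))); [apply AxM4 |].
      apply Lind_Dia; contradict Hn; eapply Lind_axiom_mp; [apply AxDN2 | exact Hn].
    + apply Lind_Dia in Hn; eapply Lind_axiom_mp; [apply AxM3 | exact Hn].
  - intros [Ha Hb]; apply NNPP; intros Hab; apply Lind_Dia in Hab.
    assert (HDb : Lind (Dia b))
      by (eapply Lind_mp; [eapply Lind_axiom_mp; [apply AxK2 | exact Hab] | exact Ha]).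
    exact (proj1 (Lind_Dia b) HDb Hb).
Qed.

Lemma Lind_T a : Lind (Box a) -> Lind a.
Proof. apply Lind_axiom_mp, AxT. Qed.

Lemma Lind_not_Box_both a : Lind (Box a) -> ~ Lind (Box (Neg a)).
Proof. intros Ha Hna; exact (proj1 (Lind_Neg a) (Lind_T _ Hna) (Lind_T _ Ha)). Qed.

Definition canon (a : For) : V4 :=
  if excluded_middle_informative (Lind (Box a)) then Tp
  else if excluded_middle_informative (Lind (Box (Neg a))) then Fm
  else if excluded_middle_informative (Lind a) then Cp else Cm.

Lemma canon_Tp a : canon a = Tp <-> Lind (Box a).
Proof. unfold canon; repeat destruct excluded_middle_informative; intuition discriminate. Qed.

Lemma canon_Fm a : canon a = Fm <-> Lind (Box (Neg a)).
Proof.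
  pose proof (Lind_not_Box_both a).
  unfold canon; repeat destruct excluded_middle_informative; intuition discriminate.
Qed.

Lemma designated_canon a : designated (canon a) <-> Lind a.
Proof.
  pose proof (Lind_T a); pose proof (proj1 (Lind_Neg a)); pose proof (Lind_T (Neg a)).
  unfold canon, designated; repeat destruct excluded_middle_informative; intuition discriminate.
Qed.

Lemma canon_valuation : valuation canon.
Proof.
  intros a b; split; [| split].
  - replace (canon (Neg a)) with (nfun (canon a)); [apply negM_nfun |].
    apply V4_ext.
    + rewrite nfun_Tp, canon_Tp, canon_Fm; tauto.
    + rewrite nfun_Fm, canon_Fm, canon_Tp; split;
        apply Lind_axiom_mp; [apply AxDN1 | apply AxDN2].
    + rewrite designated_nfun, !designated_canon, Lind_Neg; tauto.
  - apply boxM_iff; rewrite canon_Tp, designated_canon; tauto.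
  - unfold impM; apply V4_ext.
    + rewrite maxV_nfun_Tp, !canon_Tp, canon_Fm; apply Lind_Box_Imp.
    + rewrite maxV_nfun_Fm, canon_Tp, !canon_Fm; apply Lind_Box_Neg_Imp.
    + rewrite designated_maxV_nfun, !designated_canon; apply Lind_Imp.
Qed.

End Lindenbaum.

Theorem completeness G a : Entails G a -> Derivable G a.
Proof.
  intros Hentails; apply NNPP; intros Hnot.
  apply (Lind_not_alpha G a Hnot), D_hyp, (designated_canon G a Hnot).
  apply Hentails; [apply canon_valuation, Hnot |].
  intros g Hg; apply (designated_canon G a Hnot), Lind_extends, Hg.
Qed.

Theorem mainTheorem6 : forall (Gamma : For -> Prop) (a : For),
  Derivable Gamma a <-> Entails Gamma a.
Proof.
  intros Gamma a; split; [apply soundness | apply completeness].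
Qed.
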